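(* Let $\mathfrak R$ be either the Sierpiński gasket iterated graph system or the pentagonal Sierpiński carpet iterated graph system, with replacement graphs $G_m$, and let $n\in\mathbb N$. For every $\tilde w\in W_\#$ there is a folding of $G_{n+|\tilde w|}$ onto $\tilde w\cdot W_n:=\{\tilde w u:u\in W_n\}$.
   Context: Graphs: $(V,E)$ with $V$ finite non-empty, $E\subseteq V\times V$, $(x,y)\in E\Rightarrow(y,x)\notin E$; $\{x,y\}\in E$ means either orientation. A mapping between graphs $\varphi:G\to G'$ maps vertices so that each edge $\{x,y\}$ has $\varphi(x)=\varphi(y)$ or $\{\varphi(x),\varphi(y)\}\in E(G')$. A folding of $G$ onto $U\subseteq V(G)$ is a mapping between graphs $\varphi:G\to\langle U\rangle$ (induced subgraph) with $\varphi|_U=\mathrm{id}_U$. An iterated graph system consists of a connected graph $G_1=(S,E)$, a finite set $\mathcal T$ of types, a surjective typing $\mathfrak t:E\to\mathcal T$ and gluing rules $I_t\subseteq S\times S$. With $W_m=S^m$, $W_\#=\bigcup_{m\ge1}W_m$, $[w]_k=w_1\cdots w_k$, the replacement graphs $G_m=(W_m,E_m)$ are defined recursively: $(w,v)\in E_{m+1}$ iff either (1) $[w]_m=[v]_m$ and $(w_{m+1},v_{m+1})\in E$ (type $\mathfrak t(w_{m+1},v_{m+1})$), or (2) $([w]_m,[v]_m)\in E_m$ and $(w_{m+1},v_{m+1})\in I_{\mathfrak t([w]_m,[v]_m)}$ (type $\mathfrak t([w]_m,[v]_m)$). Sierpiński gasket: $S=\{0,1,2\}$, $E=\{(0,1),(1,2),(0,2)\}$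 with types $a,b,c$ respectively, $I_a=\{(1,0)\}$, $I_b=\{(2,1)\}$, $I_c=\{(2,0)\}$. Pentagonal Sierpiński carpet: $S=\{0,1,2,3,4\}$, $E=\{(0,1),(1,2),(2,3),(3,4),(4,0)\}$ with types $a,b,c,d,e$ respectively, $I_a=\{(1,0),(2,4)\}$, $I_b=\{(2,1),(3,0)\}$, $I_c=\{(3,2),(4,1)\}$, $I_d=\{(4,3),(0,2)\}$, $I_e=\{(0,4),(1,3)\}$. *)

From mathcomp Require Import all_boot.
Set Implicit Arguments. Unset Strict Implicit. Unset Printing Implicit Defensive.

(* A graph: a finite vertex type and a (directed) edge relation; {x,y} in E
   means either orientation. *)
Record graph := Graph { vert : finType; edge : rel vert }.
Arguments edge g _ _ : clear implicits.

Definition uedge (G : graph) (x y : vert G) : bool := edge G x y || edge G y x.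

Definition induced (G : graph) (U : {set vert G}) : graph :=
  @Graph {x : vert G | x \in U} (fun x y => edge G (val x) (val y)).

Definition is_mapping (G G' : graph) (phi : vert G -> vert G') : Prop :=
  forall x y : vert G, edge G x y -> phi x = phi y \/ uedge (phi x) (phi y).

Definition is_folding (G : graph) (U : {set vert G})
    (phi : vert G -> vert (induced U)) : Prop :=
  is_mapping phi /\ forall x : vert (induced U), phi (val x) = x.

(* S = 'I_k, edges E : rel 'I_k, types T, typing typ (only relevant on edges),
   gluing rules I_t. *)
Record igs := IGS {
  igs_k : nat;
  igs_E : rel 'I_igs_k;
  igs_T : finType;
  igs_typ : 'I_igs_k -> 'I_igs_k -> igs_T;
  igs_I : igs_T -> rel 'I_igs_k
}.
Arguments igs_E i _ _ : clear implicits.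
Arguments igs_typ i _ _ : clear implicits.
Arguments igs_I i _ _ _ : clear implicits.

(* Edge type of (w,v) in the replacement graph, computed on REVERSED words
   (head = last letter); None means "not an edge".  Clause (1): equal prefixes
   and last letters form an edge of G_1; clause (2): prefixes form an edge of
   type t and the last letters are in I_t. *)
Fixpoint etype_rev (R : igs) (w v : seq 'I_(igs_k R)) : option (igs_T R) :=
  match w, v with
  | a :: w', b :: v' =>
      if w' == v' then
        (if igs_E R a b then Some (igs_typ R a b) else None)
      else
        match etype_rev w' v' with
        | Some t => if igs_I R t a b then Some t else None
        | None => None
        end
  | _, _ => None
  end.

Definition etype (R : igs) (w v : seq 'I_(igs_k R)) : option (igs_T R) :=
  etype_rev (rev w) (rev v).

Definition Gm (R : igs) (m : nat) : graph :=
  @Graph (m.-tuple 'I_(igs_k R))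
         (fun w v => etype (val w) (val v) != None).

Definition prefix_set (R : igs) (N m n : nat) (wt : m.-tuple 'I_(igs_k R))
  : {set vert (Gm R N)} :=
  [set x : N.-tuple 'I_(igs_k R) |
     [exists u : n.-tuple 'I_(igs_k R), val x == val wt ++ val u]].

(* Sierpinski gasket: S={0,1,2}, E={(0,1),(1,2),(0,2)} with types a=0,b=1,c=2 *)
Definition gasket_E (x y : 'I_3) : bool :=
  [|| (val x == 0) && (val y == 1), (val x == 1) && (val y == 2)
    | (val x == 0) && (val y == 2)].
Definition gasket_typ (x y : 'I_3) : 'I_3 :=
  if (val x == 0) && (val y == 2) then inord 2 else x.
Definition gasket_I (t : 'I_3) (x y : 'I_3) : bool :=
  match val t with
  | 0 => (val x == 1) && (val y == 0)
  | 1 => (val x == 2) && (val y == 1)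
  | _ => (val x == 2) && (val y == 0)
  end.
Definition gasket : igs := @IGS 3 gasket_E 'I_3 gasket_typ gasket_I.

(* Pentagonal carpet: S={0..4}, E={(i,i+1 mod 5)}, type of (i,i+1) is i
   (a..e = 0..4), I_t = {(t+1,t),(t+2,t+4)} (indices mod 5). *)
Definition carpet_E (x y : 'I_5) : bool := val y == (val x + 1) %% 5.
Definition carpet_typ (x y : 'I_5) : 'I_5 := x.
Definition carpet_I (t : 'I_5) (x y : 'I_5) : bool :=
  ((val x == (val t + 1) %% 5) && (val y == val t))
  || ((val x == (val t + 2) %% 5) && (val y == (val t + 4) %% 5)).
Definition carpet : igs := @IGS 5 carpet_E 'I_5 carpet_typ carpet_I.

From mathcomp Require Import all_boot.
Set Implicit Arguments. Unset Strict Implicit. Unset Printing Implicit Defensive.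

(* A vertex [s :: u] of G_(n+1) is the vertex [u] of the copy [s] of G_n.
   Two words with the same first letter are adjacent iff their tails are; two
   words [a :: u], [b :: v] with [a != b] are adjacent iff [(a, b)] is an edge
   of G_1 and [u], [v] are letterwise related by the gluing rule of its type.
   So if, for all letters [s] and [a], [psi s a] is a mapping of G_n with
   [psi s s = id] that takes the same value on glued tails, then
   [a :: u |-> s :: psi s a u] is a mapping of G_(n+1) onto the copy [s], and
   iterating it along the prefix [w~] gives the folding.
   For the gasket, [psi s a] is the rotation [c |-> c + a - s] of the letters:
   the gluing rules relate letter [c] of copy [a] to letter [d] of copy [b]
   only when [c + a = d + b] mod 3.  For the pentagonal carpet, [psi s a] is
   the rotation by [s] of a map [psi 0 (a - s)] built from a symmetry of the
   pentagon, see [carpet_sym]. *)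

Lemma all2_rev (A B : Type) (r : A -> B -> bool) s t :
  all2 r (rev s) (rev t) = all2 r s t.
Proof. by rewrite !all2E !size_rev; case: eqP => // /rev_zip <-; rewrite all_rev. Qed.

Lemma all2_flip (A B : Type) (r : A -> B -> bool) s t :
  all2 r s t = all2 (fun y x => r x y) t s.
Proof. by elim: s t => [|x s IHs] [|y t] //=; rewrite IHs. Qed.

Lemma all2_map (A B C D : Type) (r : A -> B -> bool) (r' : C -> D -> bool) f g s t :
  (forall x y, r x y -> r' (f x) (g y)) -> all2 r s t -> all2 r' (map f s) (map g t).
Proof.
move=> rr'; elim: s t => [|x s IHs] [|y t] //= /andP[rxy rst].
by rewrite rr' // IHs.
Qed.

Lemma all2_map_eq (A B C : Type) (r : A -> B -> bool) (f : A -> C) (g : B -> C) s t :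
  (forall x y, r x y -> f x = g y) -> all2 r s t -> map f s = map g t.
Proof.
move=> rfg; elim: s t => [|x s IHs] [|y t] //= /andP[rxy rst].
by rewrite (rfg _ _ rxy) (IHs _ rst).
Qed.

Lemma all2_allr (A B : Type) (r : A -> B -> bool) (P : pred B) s t :
  (forall x y, r x y -> P y) -> all2 r s t -> all P t.
Proof.
move=> rP; elim: s t => [|x s IHs] [|y t] //= /andP[rxy rst].
by rewrite (rP _ _ rxy) (IHs _ rst).
Qed.

Definition ord_shift n (k : nat) (c : 'I_n.+1) : 'I_n.+1 :=
  Ordinal (ltn_pmod (c + k) (ltn0Sn n)).

Definition ord_mirror n (k : nat) (c : 'I_n.+1) : 'I_n.+1 :=
  Ordinal (ltn_pmod (k + n.+1 - c) (ltn0Sn n)).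

Section Words.

Variable R : igs.
Local Notation letter := 'I_(igs_k R).
Local Notation word := (seq letter).
Local Notation E := (igs_E R).
Local Notation I := (igs_I R).
Local Notation typ := (igs_typ R).

Definition glued (a b : letter) (u v : word) : bool :=
  E a b && all2 (I (typ a b)) u v.

Definition word_edge (u v : word) : bool := etype u v != None.
Definition adj (u v : word) : bool := word_edge u v || word_edge v u.
Definition adj_or_eq (u v : word) : bool := (u == v) || adj u v.
Definition word_mapping (f : word -> word) : Prop :=
  forall u v, adj u v -> adj_or_eq (f u) (f v).

Lemma adjC : symmetric adj.
Proof. by move=> u v; rewrite /adj orbC. Qed.

Lemma adjW u v : adj u v -> adj_or_eq u v.
Proof. by rewrite /adj_or_eq => ->; rewrite orbT. Qed.

Lemma adj_or_eq_refl : reflexive adj_or_eq.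
Proof. by move=> u; rewrite /adj_or_eq eqxx. Qed.

Lemma adj_or_eqC : symmetric adj_or_eq.
Proof. by move=> u v; rewrite /adj_or_eq adjC eq_sym. Qed.

Lemma word_mapping_edge (f : word -> word) :
  (forall u v, word_edge u v -> adj_or_eq (f u) (f v)) -> word_mapping f.
Proof. by move=> fE u v /orP[/fE // | /fE]; rewrite adj_or_eqC. Qed.

Lemma word_mapping_adj_or_eq (f : word -> word) u v :
  word_mapping f -> adj_or_eq u v -> adj_or_eq (f u) (f v).
Proof. by move=> fM /orP[/eqP-> | /fM //]; apply: adj_or_eq_refl. Qed.

Lemma word_mapping_comp (f g : word -> word) :
  word_mapping f -> word_mapping g -> word_mapping (g \o f).
Proof. by move=> fM gM u v /fM /(word_mapping_adj_or_eq gM). Qed.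

Lemma etype_rev_nil_r (w : word) : etype_rev w [::] = None.
Proof. by case: w. Qed.

Lemma word_edge_nil_r (u : word) : word_edge u [::] = false.
Proof. by rewrite /word_edge /etype etype_rev_nil_r. Qed.

Hypothesis E_irr : irreflexive E.

Lemma glued_neq a b u v : glued a b u v -> a != b.
Proof. by case/andP=> Eab _; apply: contraTneq Eab => ->; rewrite E_irr. Qed.

Lemma etype_rev_rcons_eq s (w v : word) :
  etype_rev (rcons w s) (rcons v s) = etype_rev w v.
Proof.
elim: w v => [|c w IHw] [|d v] /=.
- by rewrite E_irr.
- by case: v.
- by rewrite etype_rev_nil_r; case: w {IHw}.
- by rewrite eqseq_rcons eqxx andbT IHw.
Qed.

Lemma etype_rev_rcons_neq a b (w v : word) : a != b ->
  etype_rev (rcons w a) (rcons v b) =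
  if glued a b w v then Some (typ a b) else None.
Proof.
rewrite /glued => neq_ab; elim: w v => [|c w IHw] [|d v] /=.
- by rewrite andbT.
- by case: v; rewrite andbF.
- by rewrite etype_rev_nil_r andbF; case: w {IHw}.
- rewrite eqseq_rcons (negbTE neq_ab) andbF IHw.
  by case: (E a b) => //=; case: (all2 _ w v); case: (I _ c d).
Qed.

Lemma word_edge_cons_eq s (u v : word) : word_edge (s :: u) (s :: v) = word_edge u v.
Proof. by rewrite /word_edge /etype !rev_cons etype_rev_rcons_eq. Qed.

Lemma word_edge_cons_neq a b (u v : word) :
  a != b -> word_edge (a :: u) (b :: v) = glued a b u v.
Proof.
move=> neq_ab; rewrite /word_edge /etype !rev_cons etype_rev_rcons_neq //.
by rewrite /glued all2_rev; case: andP.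
Qed.

Lemma word_edge_consP a b (u v : word) :
  word_edge (a :: u) (b :: v) -> (a = b /\ word_edge u v) \/ glued a b u v.
Proof.
have [<- | neq_ab] := eqVneq a b; first by rewrite word_edge_cons_eq; left.
by rewrite word_edge_cons_neq //; right.
Qed.

Lemma adj_or_eq_cons s (u v : word) : adj_or_eq (s :: u) (s :: v) = adj_or_eq u v.
Proof. by rewrite /adj_or_eq /adj !word_edge_cons_eq eqseq_cons eqxx. Qed.

Definition edge_preserving (p : letter -> letter) : Prop :=
  forall a b, E a b -> E (p a) (p b) || E (p b) (p a).

Definition glue_preserving (p : letter -> letter) : Prop :=
  forall a b c d, E a b -> I (typ a b) c d ->
    if E (p a) (p b) then I (typ (p a) (p b)) (p c) (p d)
    else I (typ (p b) (p a)) (p d) (p c).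

Section Symmetry.

Variable p : letter -> letter.
Hypotheses (p_edge : edge_preserving p) (p_glue : glue_preserving p).

Lemma glued_map a b u v : glued a b u v ->
  if E (p a) (p b) then glued (p a) (p b) (map p u) (map p v)
  else glued (p b) (p a) (map p v) (map p u).
Proof.
case/andP=> Eab Iuv; have := p_edge Eab; have := p_glue Eab; rewrite /glued.
case: (E (p a) (p b)) => /= pI; first by move=> _; apply: all2_map Iuv.
move=> ->; rewrite (all2_flip _ (map p v)) /=.
by apply: all2_map Iuv => x y /pI.
Qed.

Lemma word_edge_map u v : word_edge u v -> adj (map p u) (map p v).
Proof.
elim: u v => [|a u IHu] [|b v] //; rewrite ?word_edge_nil_r //.
case/word_edge_consP => [[<- /IHu] | gl]; first by rewrite /adj /= !word_edge_cons_eq.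
move: (glued_map gl).
case: (E (p a) (p b)) => gl'; rewrite /adj /=.
  by rewrite word_edge_cons_neq ?gl' ?(glued_neq gl').
by rewrite orbC word_edge_cons_neq ?gl' ?(glued_neq gl').
Qed.

Lemma map_word_mapping : word_mapping (map p).
Proof. by apply: word_mapping_edge => u v /word_edge_map/adjW. Qed.

Definition reflect_if (P : pred word) (x : word) : word :=
  if P x then map p x else x.

Lemma size_reflect_if (P : pred word) x : size (reflect_if P x) = size x.
Proof. by rewrite /reflect_if; case: (P x); rewrite ?size_map. Qed.

Lemma reflect_if_mapping (P : pred word) : involutive p ->
  (forall u v, word_edge u v ->
     [\/ P u = P v, map p u = u, map p v = v | map p u = v]) ->
  word_mapping (reflect_if P).
Proof.
move=> pK walls; apply: word_mapping_edge => u v uv.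
have adj_uv : adj u v by rewrite /adj uv.
have near_uv : adj_or_eq u v by apply: adjW.
have near_pp : adj_or_eq (map p u) (map p v) by apply/adjW/word_edge_map.
have reflect_ifE x : reflect_if P x = x \/ reflect_if P x = map p x.
  by rewrite /reflect_if; case: (P x); [right | left].
case: (walls _ _ uv) => [same_side | fixu | fixv | swap].
- by rewrite /reflect_if -same_side; case: (P u).
- have -> : reflect_if P u = u by rewrite /reflect_if fixu; case: (P u).
  by case: (reflect_ifE v) => ->; rewrite // -fixu.
- have -> : reflect_if P v = v by rewrite /reflect_if fixv; case: (P v).
  by case: (reflect_ifE u) => ->; rewrite // -fixv.
- have swapv : map p v = u by rewrite -swap (mapK pK).
  by case: (reflect_ifE u) => ->; case: (reflect_ifE v) => ->;
    rewrite ?swap ?swapv ?adj_or_eq_refl // adj_or_eqC.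
Qed.

End Symmetry.

Section Fold.

Variable psi : letter -> letter -> word -> word.
Hypothesis psi_mapping : forall s a, word_mapping (psi s a).
Hypothesis psi_glued : forall s a b u v, glued a b u v -> psi s a u = psi s b v.
Hypothesis size_psi : forall s a u, size (psi s a u) = size u.
Hypothesis psi_id : forall s u, psi s s u = u.

Fixpoint fold_onto (p x : word) : word :=
  match p, x with
  | s :: p', a :: u => s :: fold_onto p' (psi s a u)
  | _, _ => x
  end.

Lemma fold_onto_mapping p : word_mapping (fold_onto p).
Proof.
elim: p => [|s p IHp]; first by move=> u v /adjW.
apply: word_mapping_edge => -[|a u] [|b v] //; rewrite ?word_edge_nil_r //.
case/word_edge_consP => [[<- uv] | gl] /=; rewrite adj_or_eq_cons.
  by apply: (word_mapping_adj_or_eq IHp); apply: psi_mapping; rewrite /adj uv.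
by rewrite (psi_glued s gl) adj_or_eq_refl.
Qed.

Lemma size_fold_onto p x : size (fold_onto p x) = size x.
Proof. by elim: p x => [|s p IHp] [|a u] //=; rewrite IHp size_psi. Qed.

Lemma fold_onto_cat p u : fold_onto p (p ++ u) = p ++ u.
Proof. by elim: p => [|s p IHp] /=; [case: u | rewrite psi_id IHp]. Qed.

Lemma take_fold_onto p x : size p <= size x -> take (size p) (fold_onto p x) = p.
Proof. by elim: p x => [|s p IHp] [|a u] //= le_pu; rewrite IHp // size_psi. Qed.

Lemma exists_folding n m (wt : m.-tuple letter) :
  exists phi : vert (Gm R (n + m)) -> vert (induced (prefix_set (n + m) n wt)),
    is_folding phi.
Proof.
have fold_size (x : vert (Gm R (n + m))) : size (fold_onto wt x) == n + m.
  by rewrite size_fold_onto size_tuple.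
have drop_size (x : vert (Gm R (n + m))) : size (drop m (fold_onto wt x)) == n.
  by rewrite size_drop (eqP (fold_size x)) addnK.
have fold_mem (x : vert (Gm R (n + m))) :
    (Tuple (fold_size x) : vert (Gm R (n + m))) \in prefix_set (n + m) n wt.
  rewrite inE; apply/existsP; exists (Tuple (drop_size x)) => /=.
  rewrite -{1}(cat_take_drop m (fold_onto wt x)) -{1}(size_tuple wt).
  by rewrite take_fold_onto // !size_tuple leq_addl.
exists (fun x => exist _ (Tuple (fold_size x)) (fold_mem x)); split.
  move=> x y xy; have adj_xy : adj (val x) (val y) by apply/orP; left.
  case/orP: (fold_onto_mapping wt adj_xy) => [/eqP fold_xy | ]; last by right.
  by left; apply: val_inj; apply: val_inj.
case=> z z_mem; apply: val_inj; apply: val_inj => /=.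
by move: z_mem; rewrite inE => /existsP[u /eqP ->]; rewrite fold_onto_cat.
Qed.

End Fold.
End Words.

(** * The Sierpinski gasket *)

(* [inord] does not reduce, so the enumerations below go through this form. *)
Lemma gasket_typE (a b : 'I_3) :
  gasket_typ a b = if (val a == 0) && (val b == 2) then ord_max else a.
Proof. by rewrite /gasket_typ; case: ifP => // _; apply: val_inj; rewrite /= inordK. Qed.

Definition gasket_move (s a : 'I_3) : 'I_3 -> 'I_3 := ord_shift (a + 3 - s).

Lemma gasket_irreflexive : irreflexive (igs_E gasket).
Proof. by case=> [[|[|[|?]]] ?]. Qed.

Lemma gasket_move_edge (s a : 'I_3) : edge_preserving (R := gasket) (gasket_move s a).
Proof. by move: s a; do 4![case=> [[|[|[|?]]] ?] //=]. Qed.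

Lemma gasket_move_glue (s a : 'I_3) : glue_preserving (R := gasket) (gasket_move s a).
Proof.
move=> x y c d; rewrite /= !gasket_typE; move: s a x y c d.
by do 6![case=> [[|[|[|?]]] ?] //=].
Qed.

Lemma gasket_move_glued (s a b c d : 'I_3) : gasket_E a b ->
  gasket_I (gasket_typ a b) c d -> gasket_move s a c = gasket_move s b d.
Proof.
rewrite gasket_typE; move: s a b c d.
by do 5![case=> [[|[|[|?]]] ?] //=].
Qed.

Lemma gasket_move_id (s c : 'I_3) : gasket_move s s c = c.
Proof. by apply: val_inj; move: s c; do 2![case=> [[|[|[|?]]] ?] //=]. Qed.

Lemma gasket_folding n m (wt : m.-tuple 'I_(igs_k gasket)) :
  exists phi : vert (Gm gasket (n + m)) -> vert (induced (prefix_set (n + m) n wt)),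
    is_folding phi.
Proof.
apply: (@exists_folding gasket gasket_irreflexive (fun s a => map (gasket_move s a))).
- move=> s a; apply: (map_word_mapping gasket_irreflexive).
    exact: gasket_move_edge.
  exact: gasket_move_glue.
- move=> s a b u v /andP[Eab Iuv]; apply: all2_map_eq Iuv => c d.
  exact: gasket_move_glued.
- by move=> s a u; rewrite size_map.
- by move=> s u; rewrite -[RHS]map_id; apply: eq_map => c; apply: gasket_move_id.
Qed.

(** * The pentagonal Sierpinski carpet *)

Lemma carpet_irreflexive : irreflexive (igs_E carpet).
Proof. by case=> [[|[|[|[|[|?]]]]] ?]. Qed.

Definition opp5 : 'I_5 -> 'I_5 := ord_mirror 0.

Lemma opp5K : involutive opp5.
Proof. by move=> c; apply: val_inj; move: c; case=> [[|[|[|[|[|?]]]]] ?]. Qed.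

Lemma opp5_edge : edge_preserving (R := carpet) opp5.
Proof. by rewrite /edge_preserving; do 2![case=> [[|[|[|[|[|?]]]]] ?] //=]. Qed.

Lemma opp5_glue : glue_preserving (R := carpet) opp5.
Proof. by rewrite /glue_preserving; do 4![case=> [[|[|[|[|[|?]]]]] ?] //=]. Qed.

Definition left_letter (c : 'I_5) : bool := 0 < val c < 3.

Fixpoint right_half (x : seq 'I_5) : bool :=
  if x is c :: x' then (if val c == 0 then right_half x' else 3 <= val c) else false.

Lemma right_half_left (c : 'I_5) x : left_letter c -> right_half (c :: x) = false.
Proof. by case: c => [[|[|[|[|[|?]]]]] ?]. Qed.

Lemma right_half_opp_left (c : 'I_5) x : left_letter c -> right_half (opp5 c :: x).
Proof. by case: c => [[|[|[|[|[|?]]]]] ?]. Qed.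

Lemma right_half_high (c : 'I_5) x : 3 <= val c -> right_half (c :: x).
Proof. by case: c => [[|[|[|[|[|?]]]]] ?]. Qed.

Lemma carpet_glued_letters (a b c d : 'I_5) : carpet_E a b -> carpet_I a c d ->
  [&& (val a == 0) ==> left_letter c, (val a == 2) ==> (d == opp5 c)
    & (val a == 4) ==> (3 <= val d)].
Proof. by move: a b c d; do 4![case=> [[|[|[|[|[|?]]]]] ?] //=]. Qed.

Lemma carpet_walls u v : word_edge (R := carpet) u v ->
  [\/ right_half u = right_half v, map opp5 u = u, map opp5 v = v | map opp5 u = v].
Proof.
elim: u v => [|a u IHu] [|b v] //; rewrite ?word_edge_nil_r //.
case/(word_edge_consP carpet_irreflexive) => [[<- /IHu walls_uv] | /andP[Eab Iuv]].
  have [a0 | a_ne0] := eqVneq (val a) 0; last by apply: Or41; rewrite /= (negbTE a_ne0).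
  have opp_a : opp5 a = a by apply: val_inj; rewrite /= a0.
  rewrite /= a0 opp_a; case: walls_uv => [-> | -> | -> | ->];
    by [constructor 1 | constructor 2 | constructor 3 | constructor 4].
have letters := carpet_glued_letters Eab; clear IHu.
case: a b Eab Iuv letters => [[|[|[|[|[|?]]]]] ?] [[|[|[|[|[|?]]]]] ?] //= _ Iuv letters.
- apply: Or41; case: u v Iuv => [|c u] [|d v] // /andP[Icd _].
  by rewrite right_half_left //; case/andP: (letters c d Icd).
- by apply: Or41.
- apply: Or44; congr cons; first exact: val_inj.
  rewrite -[RHS]map_id; apply: all2_map_eq Iuv => c d Icd.
  by case/andP: (letters c d Icd) => /eqP.
- by apply: Or41.
- case: u v Iuv => [|c u] [|d v] //.
    by move=> _; apply: Or43; congr cons; apply: val_inj.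
  by case/andP=> Icd _; apply: Or41; rewrite right_half_high //; apply: letters Icd.
Qed.

Definition fold_half : seq 'I_5 -> seq 'I_5 := @reflect_if carpet opp5 right_half.

Lemma fold_half_mapping : word_mapping (R := carpet) fold_half.
Proof.
apply: (reflect_if_mapping carpet_irreflexive opp5_edge opp5_glue opp5K).
exact: carpet_walls.
Qed.

Lemma size_fold_half x : size (fold_half x) = size x.
Proof. exact: size_reflect_if. Qed.

Lemma fold_half_left w : all left_letter w -> fold_half w = w.
Proof.
case: w => [|c w] //= /andP[c_left _].
by rewrite /fold_half /reflect_if right_half_left.
Qed.

Lemma fold_half_opp_left w : all left_letter w -> fold_half (map opp5 w) = w.
Proof.
case: w => [|c w] //= /andP[c_left _].
by rewrite /fold_half /reflect_if right_half_opp_left //= opp5K (mapK opp5K).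
Qed.

(* [carpet_sym a] is the symmetry of the pentagon that moves copy [a] onto
   copy 0 compatibly with the gluing, propagated along 0-1-2 and 0-4-3.
   Since 5 is odd the two propagations meet across the edge 3-4 with a
   discrepancy [opp5], which [fold_half] absorbs for copy 3. *)
Definition carpet_sym (a : 'I_5) : 'I_5 -> 'I_5 :=
  match val a with
  | 0 => ord_shift 0
  | 1 => ord_mirror 1
  | 2 => ord_shift 3
  | 3 => ord_mirror 3
  | _ => ord_mirror 4
  end.

Lemma carpet_sym_edge (a : 'I_5) : edge_preserving (R := carpet) (carpet_sym a).
Proof. by move: a; rewrite /edge_preserving; do 3![case=> [[|[|[|[|[|?]]]]] ?] //=]. Qed.

Lemma carpet_sym_glue (a : 'I_5) : glue_preserving (R := carpet) (carpet_sym a).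
Proof. by move: a; rewrite /glue_preserving; do 5![case=> [[|[|[|[|[|?]]]]] ?] //=]. Qed.

Lemma carpet_sym_glued (a b c d : 'I_5) : carpet_E a b -> carpet_I a c d ->
  carpet_sym a c == (if val a == 3 then opp5 (carpet_sym b d) else carpet_sym b d).
Proof. by move: a b c d; do 4![case=> [[|[|[|[|[|?]]]]] ?] //=]. Qed.

Lemma carpet_sym_glued_left (a b c d : 'I_5) : carpet_E a b -> carpet_I a c d ->
  (val a == 3) || (val b == 3) -> left_letter (carpet_sym b d).
Proof. by move: a b c d; do 4![case=> [[|[|[|[|[|?]]]]] ?] //=]. Qed.

Definition carpet_fold0 (a : 'I_5) (u : seq 'I_5) : seq 'I_5 :=
  if val a == 3 then fold_half (map (carpet_sym a) u) else map (carpet_sym a) u.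

Lemma carpet_fold0_mapping a : word_mapping (R := carpet) (carpet_fold0 a).
Proof.
have sym_mapping : word_mapping (R := carpet) (map (carpet_sym a)).
  apply: (map_word_mapping carpet_irreflexive).
    exact: carpet_sym_edge.
  exact: carpet_sym_glue.
rewrite /carpet_fold0; case: (val a == 3) => //.
exact: word_mapping_comp sym_mapping fold_half_mapping.
Qed.

Lemma carpet_fold0_glued a b u v : glued (R := carpet) a b u v ->
  carpet_fold0 a u = carpet_fold0 b v.
Proof.
case/andP=> Eab Iuv; rewrite /carpet_fold0.
have v_left : (val a == 3) || (val b == 3) -> all left_letter (map (carpet_sym b) v).
  move=> ab3; rewrite all_map; apply: all2_allr Iuv => c d Icd /=.
  exact: carpet_sym_glued_left Eab Icd ab3.
have glued_sym c d : carpet_I a c d ->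
    carpet_sym a c = if val a == 3 then opp5 (carpet_sym b d) else carpet_sym b d.
  by move/(carpet_sym_glued Eab)/eqP.
case: ifP v_left => a3 v_left.
  have -> : (val b == 3) = false.
    apply: contraTF Eab => /eqP b3; have -> : a = b by apply: val_inj; rewrite b3 (eqP a3).
    by rewrite carpet_irreflexive.
  have -> : map (carpet_sym a) u = map opp5 (map (carpet_sym b) v).
    by rewrite -map_comp; apply: all2_map_eq Iuv => c d /glued_sym; rewrite a3.
  by rewrite fold_half_opp_left ?v_left.
have -> : map (carpet_sym a) u = map (carpet_sym b) v.
  by apply: all2_map_eq Iuv => c d /glued_sym; rewrite a3.
by case: ifP => b3 //; rewrite fold_half_left ?v_left ?b3 ?orbT.
Qed.

Lemma carpet_shift_edge (k a b : 'I_5) :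
  igs_E carpet a b -> igs_E carpet (ord_shift k a) (ord_shift k b).
Proof. by move: k a b; do 3![case=> [[|[|[|[|[|?]]]]] ?] //=]. Qed.

Lemma carpet_shift_glue (k : 'I_5) : glue_preserving (R := carpet) (ord_shift k).
Proof. by move: k; rewrite /glue_preserving; do 5![case=> [[|[|[|[|[|?]]]]] ?] //=]. Qed.

Lemma carpet_shift_edge_preserving (k : 'I_5) : edge_preserving (R := carpet) (ord_shift k).
Proof. by move=> a b /(carpet_shift_edge k) ->. Qed.

Lemma carpet_shift_mapping (k : 'I_5) : word_mapping (R := carpet) (map (ord_shift k)).
Proof.
apply: (map_word_mapping carpet_irreflexive).
  exact: carpet_shift_edge_preserving.
exact: carpet_shift_glue.
Qed.

Lemma carpet_shift_glued (k : 'I_5) a b u v : glued (R := carpet) a b u v ->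
  glued (R := carpet) (ord_shift k a) (ord_shift k b)
    (map (ord_shift k) u) (map (ord_shift k) v).
Proof.
move=> gl; case/andP: (gl) => /(carpet_shift_edge k) Eab' _.
have := glued_map (carpet_shift_edge_preserving k) (carpet_shift_glue k) gl.
by rewrite Eab'.
Qed.

Lemma ord_shift_oppK (k : 'I_5) : cancel (@ord_shift 4 (opp5 k)) (ord_shift k).
Proof. by move=> c; apply: val_inj; move: k c; do 2![case=> [[|[|[|[|[|?]]]]] ?] //=]. Qed.

Lemma ord_shift_opp_id (k : 'I_5) : val (ord_shift (opp5 k) k) = 0.
Proof. by case: k => [[|[|[|[|[|?]]]]] ?]. Qed.

Lemma ord_shift0 (c : 'I_5) : ord_shift 0 c = c.
Proof. by apply: val_inj; rewrite /= addn0 modn_small. Qed.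

Definition carpet_fold (s a : 'I_5) (u : seq 'I_5) : seq 'I_5 :=
  map (ord_shift s) (carpet_fold0 (ord_shift (opp5 s) a) (map (ord_shift (opp5 s)) u)).

Lemma carpet_fold_mapping s a : word_mapping (R := carpet) (carpet_fold s a).
Proof.
apply: word_mapping_comp (carpet_shift_mapping s).
exact: word_mapping_comp (carpet_shift_mapping _) (carpet_fold0_mapping _).
Qed.

Lemma carpet_fold_glued s a b u v : glued (R := carpet) a b u v ->
  carpet_fold s a u = carpet_fold s b v.
Proof.
by move/(carpet_shift_glued (opp5 s))/carpet_fold0_glued; rewrite /carpet_fold => ->.
Qed.

Lemma size_carpet_fold s a u : size (carpet_fold s a u) = size u.
Proof.
rewrite /carpet_fold /carpet_fold0 size_map.
by case: ifP; rewrite ?size_fold_half !size_map.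
Qed.

Lemma carpet_fold_id s u : carpet_fold s s u = u.
Proof.
rewrite /carpet_fold /carpet_fold0 /carpet_sym ord_shift_opp_id /=.
by rewrite (eq_map ord_shift0) map_id (mapK (ord_shift_oppK s)).
Qed.

Lemma carpet_folding n m (wt : m.-tuple 'I_(igs_k carpet)) :
  exists phi : vert (Gm carpet (n + m)) -> vert (induced (prefix_set (n + m) n wt)),
    is_folding phi.
Proof.
apply: (exists_folding carpet_irreflexive (psi := carpet_fold)).
- exact: carpet_fold_mapping.
- exact: carpet_fold_glued.
- exact: size_carpet_fold.
- exact: carpet_fold_id.
Qed.

Theorem proposition4p10 (R : igs) (HR : R = gasket \/ R = carpet) (n m : nat)
    (Hm : 0 < m) (wt : m.-tuple 'I_(igs_k R)) :
  exists phi : vert (Gm R (n + m)) -> vert (induced (prefix_set (n + m) n wt)),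
    is_folding phi.
Proof.
by case: HR => ?; subst R; [apply: gasket_folding | apply: carpet_folding].
Qed.
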